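(* Let $p$ be an odd prime, let $v$ be an integer with $1<v<p-1$, let $g\in\{2,\dots,p-1\}$ be a primitive root modulo $p$, let $t\ge1$ and $b\in\{0,\dots,v-1\}$. Let $$\rho(b,t)=\#\{i\in[1,p-1]:\ g^i\,\%\,p\not\equiv b,\ g^{i+t+1}\,\%\,p\not\equiv b,\ g^{i+j}\,\%\,p\equiv b\ (1\le j\le t)\},$$ all congruences modulo $v$. Write $p=q\,g^{t+1}+r$ with $0\le r<g^{t+1}$. Then $$(v-1)\left\lfloor\frac{g}{v}\right\rfloor^{t}\left\lfloor\frac{(v-1)g}{v}\right\rfloor\left\lfloor\frac{q}{v}\right\rfloor\ \le\ \rho(b,t)\ \le\ (v-1)\left\lceil\frac{g}{v}\right\rceil^{t}\left\lceil\frac{(v-1)g}{v}\right\rceil\left\lceil\frac{q+1}{v}\right\rceil.$$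
   Context: $x\,\%\,p$ denotes the least nonnegative remainder of the integer $x$ modulo $p$. *)

From mathcomp Require Import all_boot.

Definition is_prim_root (p g : nat) : Prop :=
  g ^ p.-1 %% p = 1 %% p /\ (forall k, 0 < k < p.-1 -> g ^ k %% p != 1 %% p).

Definition rho (p v g b t : nat) : nat :=
  #|[set i : 'I_p | (0 < i)
      && ((g ^ i %% p) %% v != b)
      && ((g ^ (i + t.+1) %% p) %% v != b)
      && [forall j : 'I_t.+1, (0 < j) ==> ((g ^ (i + j) %% p) %% v == b)]]|.

Definition ceildiv (a d : nat) : nat := (a + d.-1) %/ d.

From mathcomp Require Import all_boot zify.

(* Since g is a primitive root, i |-> g^i mod p permutes [1, p-1], so rho counts
   the x in [1, p-1] whose iterates x g^j mod p, for 0 <= j <= t+1, fall in the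
   class of b modulo v exactly for 1 <= j <= t.  Put T = t+1 and C = floor(x g^T / p),
   a number with T digits in base g.  Modulo v, x g^j mod p is congruent to
   (x mod v) g^j - p floor(C / g^(T-j)), so whether x is counted depends only on
   a = x mod v and the digits of C.  Reading the digits one by one, each condition
   constrains the new digit c in [0, g) by a congruence c = const (mod v), which
   holds for between floor(g/v) and ceil(g/v) digits since p is invertible modulo v;
   the last condition fails for between floor((v-1)g/v) and ceil((v-1)g/v) digits,
   and a ranges over v-1 classes.  Finally, the x with floor(x g^T / p) = C form an
   interval of length q or q+1, which contains between floor(q/v) and
   ceil((q+1)/v) elements of each class modulo v. *)

Lemma leq_ceildivLR m n d : 0 < d -> (ceildiv m d <= n) = (m <= n * d).
Proof. by move=> d_gt0; rewrite /ceildiv -ltnS ltn_divLR //; lia. Qed.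

Lemma leq_ceildiv2r d m n : m <= n -> ceildiv m d <= ceildiv n d.
Proof. by move=> le_mn; rewrite /ceildiv leq_div2r // leq_add2r. Qed.

Lemma ceildivDMl m n d : 0 < d -> ceildiv (m + n * d) d = ceildiv m d + n.
Proof. by move=> d_gt0; rewrite /ceildiv addnAC divnDMl. Qed.

Lemma ceildivMl n d : 0 < d -> ceildiv (n * d) d = n.
Proof.
by move=> d_gt0; rewrite -[n * d]add0n ceildivDMl // /ceildiv divn_small ?prednK.
Qed.

Lemma leq_divn_predM_ceildiv v g : 0 < v -> (v.-1 * g) %/ v + ceildiv g v <= g.
Proof.
move=> v_gt0; rewrite -ltnS -(ltn_pmul2r v_gt0) mulnDl /ceildiv.
have := leq_divM (v.-1 * g) v; have := leq_divM (g + v.-1) v.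
nia.
Qed.

Lemma leq_ceildiv_predM_divn v g : 0 < v -> g <= g %/ v + ceildiv (v.-1 * g) v.
Proof.
move=> v_gt0; rewrite -ltnS -(ltn_pmul2r v_gt0) mulSn mulnDl /ceildiv.
have := ltn_ceil g v_gt0; have := ltn_ceil (v.-1 * g + v.-1) v_gt0.
nia.
Qed.

Lemma divn_digit g C c : c < g -> (C * g + c) %/ g = C.
Proof.
by move=> c_lt_g; rewrite divnMDl ?divn_small ?addn0 // (leq_ltn_trans _ c_lt_g).
Qed.

Lemma eqn_mod_coprime_mul2l v u c c' : coprime v u ->
  (u * c == u * c' %[mod v]) = (c == c' %[mod v]).
Proof.
move=> co_vu; wlog le_c'c : c c' / c' <= c.
  move=> le_wlog; have [/le_wlog //|/ltnW/le_wlog] := leqP c' c.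
  by rewrite eq_sym [(c == _ %[mod v])]eq_sym.
by rewrite !eqn_mod_dvd ?leq_mul2l ?le_c'c ?orbT // -mulnBr Gauss_dvdr.
Qed.

Lemma modn_mod_eq_divn p v b y : b < v ->
  (y %% p %% v == b) = (y == b + p * (y %/ p) %[mod v]).
Proof.
move=> b_lt_v; have -> : (y %% p %% v == b) = (y %% p == b %[mod v]).
  by rewrite (modn_small b_lt_v).
by rewrite -(eqn_modDr (p * (y %/ p))) addnC mulnC -divn_eq.
Qed.

Lemma sum_nat_pick (F : nat -> nat) m n k : m <= k < n ->
  \sum_(m <= i < n) (i == k) * F i = F k.
Proof.
move=> k_range; rewrite (bigD1_seq k) ?mem_index_iota ?iota_uniq //= eqxx mul1n.
by rewrite big1 ?addn0 // => i /negPf->.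
Qed.

Lemma sum_nat_negb (P : pred nat) n :
  \sum_(0 <= c < n) (~~ P c : nat) = n - \sum_(0 <= c < n) (P c : nat).
Proof.
have total : \sum_(0 <= c < n) ((~~ P c : nat) + P c) = n.
  rewrite -[RHS]subn0 -[RHS]muln1 -sum_nat_const_nat.
  by apply: eq_bigr => c _; case: (P c).
by rewrite -[X in X - _]total big_split /= addnK.
Qed.

Lemma sum_nat_neq b n : b < n -> \sum_(0 <= a < n) (a != b : nat) = n.-1.
Proof.
move=> b_lt_n; rewrite sum_nat_negb (eq_bigr (fun a => (a == b) * 1)).
  by rewrite sum_nat_pick ?subn1.
by move=> a _; rewrite muln1.
Qed.

Lemma sum_nat_restrict (P : pred nat) lo hi n : hi <= n ->
  \sum_(0 <= x < n) ((lo <= x < hi) && P x : nat) = \sum_(lo <= x < hi) (P x : nat).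
Proof.
move=> hi_le_n; have [lo_le_hi|hi_lt_lo] := leqP lo hi; last first.
  rewrite [RHS]big_geq ?(ltnW hi_lt_lo) // big1 // => x _.
  by rewrite (_ : (lo <= x < hi) = false) //; lia.
rewrite (big_cat_nat (n := lo)) ?(leq_trans lo_le_hi) //= big1_seq ?add0n; last first.
  by move=> x; rewrite mem_index_iota => /andP[_ /andP[_ x_lt]]; rewrite leqNgt x_lt.
rewrite (big_nat_widen _ _ _ _ _ hi_le_n) [RHS]big_mkcond.
by apply: eq_big_nat => x /andP[-> _] /=; case: (x < hi).
Qed.

Lemma sum_nat_fibers (F : nat -> nat -> nat) (f h : nat -> nat) n m k :
  (forall x, x < n -> f x < m /\ h x < k) ->
  \sum_(0 <= x < n) F (f x) (h x) =
  \sum_(0 <= i < m) \sum_(0 <= j < k)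
    F i j * \sum_(0 <= x < n) ((f x == i) && (h x == j)).
Proof.
move=> fh_lt.
transitivity (\sum_(0 <= i < m) \sum_(0 <= j < k) \sum_(0 <= x < n)
                F i j * ((f x == i) && (h x == j))); last first.
  by apply: eq_bigr => i _; apply: eq_bigr => j _; rewrite big_distrr.
rewrite (eq_bigr _ (fun i _ => exchange_big_nat _ _ _ _ _ _ _ _)) exchange_big_nat /=.
apply: eq_big_nat => x /andP[_ /fh_lt[fx_lt hx_lt]].
rewrite -(sum_nat_pick (fun i => F i (h x)) 0 m (f x)) //; apply: eq_bigr => i _.
rewrite -(sum_nat_pick (F i) 0 k (h x)) // big_distrr; apply: eq_bigr => j _.
rewrite /= (eq_sym i) (eq_sym j).
by case: (f x == i); case: (h x == j); rewrite ?mul0n ?mul1n ?muln0 ?muln1.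
Qed.

Lemma sum_nat_digits_and (B P : pred nat) m g :
  \sum_(0 <= C < m * g) (B (C %/ g) && P C : nat) =
  \sum_(0 <= C < m) B C * \sum_(0 <= c < g) (P (C * g + c) : nat).
Proof.
rewrite big_nat_mul; apply: eq_bigr => C _.
rewrite -{1}(add0n (C * g)) big_addn mulSn addnK big_distrr.
by apply: eq_big_nat => c /andP[_ c_lt_g]; rewrite /= addnC divn_digit // mulnb.
Qed.

Lemma leq_sum_scale_bounds (I : eqType) (r : seq I) (X Y : I -> nat) lo hi :
  (forall i, i \in r -> lo * Y i <= X i <= hi * Y i) ->
  lo * \sum_(i <- r) Y i <= \sum_(i <- r) X i <= hi * \sum_(i <- r) Y i.
Proof.
move=> XY_bounds; rewrite !big_distrr /=.
by apply/andP; split; rewrite big_seq_cond [X in _ <= X]big_seq_cond;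
  apply: leq_sum => i /andP[/XY_bounds/andP[lb ub] _].
Qed.

Lemma leq_sum_mul_bounds (I : eqType) (r : seq I) (w K : I -> nat) lo hi :
  (forall i, i \in r -> lo <= K i <= hi) ->
  lo * \sum_(i <- r) w i <= \sum_(i <- r) w i * K i <= hi * \sum_(i <- r) w i.
Proof.
move=> K_bounds; apply: leq_sum_scale_bounds => i /K_bounds/andP[lo_K K_hi].
by rewrite mulnC leq_mul2l lo_K orbT /= [hi * _]mulnC leq_mul2l K_hi orbT.
Qed.

Lemma sum_mod_period v a M : 0 < v -> a < v ->
  \sum_(M <= x < M + v) (x %% v == a : nat) = 1.
Proof.
move=> v_gt0 a_lt_v; elim: M => [|M IHM].
  rewrite add0n -(sum_nat_pick (fun=> 1) 0 v a) ?a_lt_v //.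
  by apply: eq_big_nat => x /andP[_ x_lt_v]; rewrite modn_small // muln1.
have : \sum_(M <= x < (M + v).+1) (x %% v == a : nat) = 1 + (M %% v == a).
  by rewrite big_nat_recr ?leq_addr //= IHM modnDr.
by rewrite big_ltn ?ltnS ?leq_addr // !addSn; lia.
Qed.

Lemma sum_mod_interval_bounds v a L n : 0 < v -> a < v ->
  n %/ v <= \sum_(L <= x < L + n) (x %% v == a : nat) <= ceildiv n v.
Proof.
move=> v_gt0 a_lt_v; elim/ltn_ind: n L => n IHn L.
have [n_lt_v | v_le_n] := ltnP n v.
  rewrite divn_small //=; have [->|n_gt0] := posnP n; first by rewrite addn0 big_geq.
  apply: (@leq_trans 1); last by rewrite /ceildiv leq_divRL //; lia.
  rewrite -(sum_mod_period v a L) // [X in _ <= X](big_cat_nat (n := L + n)) /=.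
  - exact: leq_addr.
  - exact: leq_addr.
  - by rewrite leq_add2l ltnW.
have -> : L + n = L + v + (n - v) by lia.
rewrite (big_cat_nat (n := L + v)) ?leq_addr //= sum_mod_period //.
have -> : n %/ v = (n - v) %/ v + 1.
  by rewrite -{1}(subnK v_le_n) -{2}(mul1n v) divnDMl.
have -> : ceildiv n v = ceildiv (n - v) v + 1.
  by rewrite /ceildiv -{1}(subnK v_le_n) -{2}(mul1n v) addnAC divnDMl.
have /andP[lb ub] := IHn (n - v) ltac:(lia) (L + v).
by apply/andP; split; lia.
Qed.

Lemma affine_mod_onto v p d w : 0 < v -> coprime v p ->
  exists2 r, r < v & (d + p * r) %% v = w %% v.
Proof.
move=> v_gt0 co_vp.
pose h (c : 'I_v) : 'I_v := Ordinal (ltn_pmod (d + p * c) v_gt0).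
have h_inj : injective h.
  move=> c c' /(congr1 val) /= /eqP; rewrite eqn_modDl eqn_mod_coprime_mul2l //.
  by rewrite !modn_small // => /eqP /val_inj.
have [h_inv _ hK] := injF_bij h_inj.
exists (h_inv (Ordinal (ltn_pmod w v_gt0))) => //.
exact: (congr1 val (hK (Ordinal (ltn_pmod w v_gt0)))).
Qed.

Lemma sum_affine_mod_bounds v p g d w : 0 < v -> coprime v p ->
  g %/ v <= \sum_(0 <= c < g) (w == d + p * c %[mod v] : nat) <= ceildiv g v.
Proof.
move=> v_gt0 co_vp; have [r r_lt_v dr_w] := affine_mod_onto v p d w v_gt0 co_vp.
under eq_bigr => c _.
  by rewrite -dr_w eqn_modDl eqn_mod_coprime_mul2l // (modn_small r_lt_v) eq_sym; over.
by have := sum_mod_interval_bounds v r 0 g v_gt0 r_lt_v; rewrite add0n.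
Qed.

Lemma eq_divn_mul_ceildiv p G C x : 0 < p -> 0 < G ->
  (x * G %/ p == C) = (ceildiv (C * p) G <= x < ceildiv (C.+1 * p) G).
Proof.
move=> p_gt0 G_gt0.
rewrite eqn_leq -ltnS ltn_divLR // leq_divRL // andbC leq_ceildivLR //.
by rewrite [x < _]ltnNge leq_ceildivLR // -ltnNge.
Qed.

Lemma ceildiv_diff_bounds p q r G C : 0 < G -> p = q * G + r -> r < G ->
  q <= ceildiv (C.+1 * p) G - ceildiv (C * p) G <= q.+1.
Proof.
move=> G_gt0 pE r_lt_G.
have -> : C.+1 * p = (C * p + r) + q * G by rewrite mulSn pE; lia.
rewrite ceildivDMl //.
have lb := leq_ceildiv2r G _ _ (leq_addr r (C * p)).
have ub : ceildiv (C * p + r) G <= ceildiv (C * p) G + 1.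
  by rewrite -ceildivDMl // mul1n leq_ceildiv2r // leq_add2l ltnW.
by apply/andP; split; lia.
Qed.

Lemma sum_fiber_mod_bounds p q r G C v a : 0 < v -> a < v -> 0 < p ->
  p = q * G + r -> r < G -> C < G ->
  q %/ v <= \sum_(0 <= x < p) ((x %% v == a) && (x * G %/ p == C) : nat)
         <= ceildiv q.+1 v.
Proof.
move=> v_gt0 a_lt_v p_gt0 pE r_lt_G C_lt_G; have G_gt0 : 0 < G by lia.
under eq_bigr do rewrite andbC eq_divn_mul_ceildiv //.
set lo := ceildiv (C * p) G; set hi := ceildiv (C.+1 * p) G.
have hi_le_p : hi <= p.
  rewrite /hi -{2}(ceildivMl p G G_gt0) leq_ceildiv2r //.
  by rewrite [p * G]mulnC leq_mul2r C_lt_G orbT.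
have lo_le_hi : lo <= hi by rewrite leq_ceildiv2r // leq_mul2r leqnSn orbT.
have /andP[len_ge len_le] := ceildiv_diff_bounds p q r G C G_gt0 pE r_lt_G.
rewrite sum_nat_restrict // -(subnKC lo_le_hi).
have /andP[lb ub] := sum_mod_interval_bounds v a lo (hi - lo) v_gt0 a_lt_v.
rewrite (leq_trans (leq_div2r v len_ge) lb) /=.
exact: leq_trans ub (leq_ceildiv2r v _ _ len_le).
Qed.

Section Runs.

Variables p v g b : nat.

(* C is read as an n-digit number in base g.  When a = x mod v and C = x g^n %/ p,
   the j-digit prefix C %/ g^(n-j) is x g^j %/ p, and the j-th test says that
   x g^j mod p is congruent to b modulo v. *)
Fixpoint hits n a C : bool :=
  if n is n'.+1 then hits n' a (C %/ g) && (a * g ^ n == b + p * C %[mod v])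
  else true.

Definition exact_run t a C :=
  hits t a (C %/ g) && ~~ (a * g ^ t.+1 == b + p * C %[mod v]).

Definition run_at t x :=
  [&& x %% v != b, x * g ^ t.+1 %% p %% v != b
    & all (fun j => x * g ^ j %% p %% v == b) (iota 1 t)].

Definition run_patterns t :=
  \sum_(0 <= a < v) \sum_(0 <= C < g ^ t.+1) ((a != b) && exact_run t a C).

Hypothesis g_gt0 : 0 < g.
Hypothesis b_lt_v : b < v.

Lemma divn_mul_expS x n : x * g ^ n.+1 %/ p %/ g = x * g ^ n %/ p.
Proof. by rewrite -divnMA expnSr mulnA divnMr. Qed.

Lemma hits_iterates n x :
  hits n (x %% v) (x * g ^ n %/ p) =
  all (fun j => x * g ^ j %% p %% v == b) (iota 1 n).
Proof.
elim: n => [//|n IHn].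
have -> : iota 1 n.+1 = iota 1 n ++ [:: n.+1].
  by rewrite -[n.+1]addn1 iotaD (addnC 1 n).
by rewrite all_cat /= andbT divn_mul_expS IHn modnMml -modn_mod_eq_divn.
Qed.

Lemma run_atE t x :
  run_at t x = (x %% v != b) && exact_run t (x %% v) (x * g ^ t.+1 %/ p).
Proof.
rewrite /run_at /exact_run divn_mul_expS hits_iterates modnMml -modn_mod_eq_divn //.
by case: (x %% v != b); case: (_ %% v == b); case: all.
Qed.


Hypothesis v_gt0 : 0 < v.
Hypothesis co_vp : coprime v p.

Lemma sum_run_at_fibers t :
  \sum_(0 <= x < p) run_at t x =
  \sum_(0 <= a < v) \sum_(0 <= C < g ^ t.+1) ((a != b) && exact_run t a C) *
    \sum_(0 <= x < p) ((x %% v == a) && (x * g ^ t.+1 %/ p == C)).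
Proof.
under eq_big_nat => x _ do rewrite run_atE.
apply: (sum_nat_fibers (fun a C => (a != b) && exact_run t a C)) => x x_lt_p.
have p_gt0 : 0 < p by apply: leq_ltn_trans x_lt_p.
by rewrite ltn_pmod // ltn_divLR // mulnC ltn_pmul2l // expn_gt0 g_gt0.
Qed.

Lemma sum_digit_bounds k a C :
  g %/ v <= \sum_(0 <= c < g) (a * g ^ k == b + p * (C * g + c) %[mod v] : nat)
         <= ceildiv g v.
Proof.
under eq_bigr do rewrite mulnDr addnA.
exact: sum_affine_mod_bounds.
Qed.

Lemma sum_hits_bounds n a :
  (g %/ v) ^ n <= \sum_(0 <= C < g ^ n) hits n a C <= ceildiv g v ^ n.
Proof.
elim: n => [|n IHn]; first by rewrite !expn0 big_nat1.
have /andP[IH_lb IH_ub] := IHn.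
rewrite !expnSr sum_nat_digits_and.
pose hit C := \sum_(0 <= c < g)
  (a * g ^ n.+1 == b + p * (C * g + c) %[mod v] : nat).
have /andP[lb ub] := leq_sum_mul_bounds _ (index_iota 0 (g ^ n))
  (fun C => hits n a C : nat) hit _ _ (fun C _ => sum_digit_bounds n.+1 a C).
by apply/andP; split; [apply: leq_trans lb | apply: leq_trans ub _];
  rewrite mulnC leq_mul.
Qed.

Lemma sum_exact_run_bounds t a :
  (g %/ v) ^ t * ((v.-1 * g) %/ v) <= \sum_(0 <= C < g ^ t.+1) exact_run t a C
                                  <= ceildiv g v ^ t * ceildiv (v.-1 * g) v.
Proof.
have /andP[hits_lb hits_ub] := sum_hits_bounds t a.
rewrite expnSr sum_nat_digits_and.
pose miss C := \sum_(0 <= c < g)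
  (~~ (a * g ^ t.+1 == b + p * (C * g + c) %[mod v]) : nat).
have miss_bounds C : (v.-1 * g) %/ v <= miss C <= ceildiv (v.-1 * g) v.
  have /andP[lb ub] := sum_digit_bounds t.+1 a C.
  have := leq_divn_predM_ceildiv v g v_gt0; have := leq_ceildiv_predM_divn v g v_gt0.
  by rewrite /miss sum_nat_negb => *; apply/andP; split; lia.
have /andP[lb ub] := leq_sum_mul_bounds _ (index_iota 0 (g ^ t))
  (fun C => hits t a C : nat) miss _ _ (fun C _ => miss_bounds C).
by apply/andP; split; [apply: leq_trans lb | apply: leq_trans ub _];
  rewrite mulnC leq_mul.
Qed.

Lemma run_patterns_bounds t :
  v.-1 * (g %/ v) ^ t * ((v.-1 * g) %/ v) <= run_patterns t
                           <= v.-1 * ceildiv g v ^ t * ceildiv (v.-1 * g) v.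
Proof.
have -> : run_patterns t =
    \sum_(0 <= a < v) (a != b) * \sum_(0 <= C < g ^ t.+1) exact_run t a C.
  by apply: eq_bigr => a _; rewrite big_distrr; apply: eq_bigr => C _; rewrite /= mulnb.
have /andP[lb ub] := leq_sum_mul_bounds _ (index_iota 0 v) (fun a => (a != b : nat))
  (fun a => \sum_(0 <= C < g ^ t.+1) exact_run t a C) _ _
  (fun a _ => sum_exact_run_bounds t a).
by rewrite sum_nat_neq // !(mulnC _ v.-1) !mulnA in lb ub; rewrite lb ub.
Qed.

Lemma sum_run_at_bounds t q r : 0 < p -> p = q * g ^ t.+1 + r -> r < g ^ t.+1 ->
  q %/ v * run_patterns t <= \sum_(0 <= x < p) run_at t x
                          <= ceildiv q.+1 v * run_patterns t.
Proof.
move=> p_gt0 pE r_lt; rewrite sum_run_at_fibers /run_patterns.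
apply: leq_sum_scale_bounds => a; rewrite mem_index_iota => /andP[_ a_lt_v].
apply: leq_sum_mul_bounds => C; rewrite mem_index_iota => /andP[_ C_lt].
exact: sum_fiber_mod_bounds v_gt0 a_lt_v p_gt0 pE r_lt C_lt.
Qed.

End Runs.

Lemma forall_ord_iota n (P : pred nat) :
  [forall j : 'I_n.+1, (0 < j) ==> P j] = all P (iota 1 n).
Proof.
apply/forallP/allP => [P_ord j | P_iota j].
  rewrite mem_iota add1n => /andP[j_gt0 j_le_n].
  exact: implyP (P_ord (Ordinal j_le_n)) j_gt0.
by apply/implyP => j_gt0; apply: P_iota; rewrite mem_iota j_gt0 add1n ltn_ord.
Qed.

Section PrimitiveRoot.

Variables p g : nat.
Hypothesis p_prime : prime p.
Hypothesis co_pg : coprime p g.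
Hypothesis g_prim : is_prim_root p g.

Lemma expn_mod_gt0 i : 0 < g ^ i %% p.
Proof. by rewrite lt0n; move: (coprimeXr i co_pg); rewrite prime_coprime. Qed.

Lemma expn_mod_inj i j : 0 < i < p -> 0 < j < p -> g ^ i %% p = g ^ j %% p -> i = j.
Proof.
wlog le_ij : i j / i <= j.
  move=> wlog_ij i_range j_range eq_ij.
  have [le_ij|/ltnW le_ji] := leqP i j; first exact: wlog_ij.
  exact/esym/wlog_ij.
move=> /andP[i_gt0 _] /andP[_ j_lt_p] eq_ij; apply/eqP; rewrite eqn_leq le_ij leqNgt.
apply/negP => lt_ij; have ji_range : 0 < j - i < p.-1 by lia.
have [_ /(_ _ ji_range)] := g_prim.
rewrite -(eqn_mod_coprime_mul2l p (g ^ i)) ?coprimeXr // muln1 -expnD subnKC //.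
by rewrite eq_ij eqxx.
Qed.

Lemma perm_expn_mod_iota : perm_eq [seq g ^ i %% p | i <- iota 1 p.-1] (iota 1 p.-1).
Proof.
have p_gt0 := prime_gt0 p_prime.
have uniq_expn : uniq [seq g ^ i %% p | i <- iota 1 p.-1].
  rewrite map_inj_in_uniq ?iota_uniq // => i j.
  by rewrite !mem_iota add1n prednK //; apply: expn_mod_inj.
have sub_iota : {subset [seq g ^ i %% p | i <- iota 1 p.-1] <= iota 1 p.-1}.
  by move=> _ /mapP[i _ ->]; rewrite mem_iota expn_mod_gt0 add1n prednK // ltn_pmod.
have [_ eq_mem] := uniq_min_size uniq_expn sub_iota (eq_leq (esym (size_map _ _))).
exact: uniq_perm (iota_uniq _ _) eq_mem.
Qed.

End PrimitiveRoot.

Lemma rho_sum_run_at p v g b t : prime p -> coprime p g -> is_prim_root p g -> 0 < t ->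
  rho p v g b t = \sum_(0 <= x < p) run_at p v g b t x.
Proof.
move=> p_prime co_pg g_prim t_gt0; have p_gt0 := prime_gt0 p_prime.
have run_at0 : run_at p v g b t 0 = false.
  by case: t t_gt0 => // t _; rewrite /run_at /= !mul0n !mod0n; case: (0 == b).
rewrite big_ltn // run_at0 add0n.
have -> : \sum_(1 <= x < p) run_at p v g b t x =
          \sum_(1 <= i < p) run_at p v g b t (g ^ i %% p).
  rewrite /index_iota subn1 -(perm_big _ (perm_expn_mod_iota p g p_prime co_pg g_prim)).
  by rewrite big_map.
rewrite /rho -sum1dep_card big_mkcond /=.
transitivity (\sum_(i < p) ((0 < i) && run_at p v g b t (g ^ i %% p) : nat)).
  apply: eq_bigr => i _.
  rewrite /run_at (forall_ord_iota t (fun j => g ^ (i + j) %% p %% v == b)).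
  have expn_modMl k : g ^ i %% p * g ^ k %% p = g ^ (i + k) %% p.
    by rewrite modnMml expnD.
  under [in RHS]eq_all => j do rewrite expn_modMl.
  by rewrite expn_modMl -!andbA.
rewrite -(big_mkord xpredT (fun i => (0 < i) && run_at p v g b t (g ^ i %% p) : nat)).
by rewrite big_ltn //; apply: eq_big_nat => i /andP[i_gt0 _]; rewrite i_gt0.
Qed.

Theorem corollary9 (p v g t b q r : nat) :
  prime p -> odd p ->
  1 < v -> v < p.-1 ->
  2 <= g <= p.-1 -> is_prim_root p g ->
  1 <= t -> b < v ->
  p = q * g ^ t.+1 + r -> r < g ^ t.+1 ->
  (v.-1 * (g %/ v) ^ t * ((v.-1 * g) %/ v) * (q %/ v) <= rho p v g b t)
  /\
  (rho p v g b t <= v.-1 * (ceildiv g v) ^ t * ceildiv (v.-1 * g) v * ceildiv q.+1 v).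
Proof.
move=> p_prime _ v_gt1 v_lt_p /andP[g_ge2 g_le_p] g_prim t_gt0 b_lt_v pE r_lt.
have p_gt0 := prime_gt0 p_prime.
have g_gt0 : 0 < g by apply: leq_trans g_ge2.
have v_gt0 : 0 < v by apply: ltnW.
have co_pg : coprime p g.
  by rewrite prime_coprime //; apply/negP => /(dvdn_leq g_gt0); lia.
have co_vp : coprime v p.
  by rewrite coprime_sym prime_coprime //; apply/negP => /(dvdn_leq v_gt0); lia.
have /andP[S_lb S_ub] := run_patterns_bounds p v g b g_gt0 b_lt_v v_gt0 co_vp t.
have /andP[lb ub] := sum_run_at_bounds p v g b g_gt0 b_lt_v v_gt0 t q r p_gt0 pE r_lt.
rewrite (rho_sum_run_at p v g b t p_prime co_pg g_prim t_gt0); split.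
- by apply: leq_trans lb; rewrite mulnC leq_mul.
- by apply: leq_trans ub _; rewrite mulnC leq_mul.
Qed.
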